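(* Consider the following network, in which every edge has capacity $2$. - Two inputs $s_1,s_2$ and two outputs $t_1,t_2$. - Four vertices $a,b,p,q$. - Edges: - $s_1$–$a$, $a$–$p$, $p$–$t_1$; - $s_2$–$b$, $b$–$q$, $q$–$t_2$; - two ''diagonal'' edges $a$–$q$ and $b$–$p$. Local orderings $L_1$: - at $a$: $1=(s_1a)$, $2=(ap)$, $3=(aq)$; - at $b$: $1=(s_2b)$, $2=(bq)$, $3=(bp)$; - at $p$: $1=(pt_1)$, $2=(bp)$, $3=(ap)$; - at $q$: $1=(qt_2)$, $2=(aq)$, $3=(bq)$. All four vertices have valence type $(2,2,2)$, so a Version II assignment is a single tensor $\mathcal T\in(\mathbb{C}^2)^{\otimes3}$ placed at every vertex according to $L_1$. Then for every such $\mathcal T$ the resulting map $\beta(G,c,L_1;\mathcal T):\mathbb{C}^2\otimes\mathbb{C}^2\to\mathbb{C}^2\otimes\mathbb{C}^2$ has rank at most $3$. Hence $\mathrm{QMF}(G,c,L_1)\le3<4=\mathrm{QMC}(G,c)$.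
   Context: A tensor network template $(G,c)$ consists of a finite undirected graph $G$ with edge set $E$ whose vertex set is partitioned as $S\sqcup T\sqcup V$. Every element of $S$ (inputs) and every element of $T$ (outputs) is an open end of degree $1$; the elements of $V$ are called vertices. For $u\in S\sqcup T$, $e(u)$ denotes the edge incident to $u$. A capacity function $c:E\to\mathbb{Z}_{>0}$ is given, and to each edge $e$ one associates $\mathbb{C}^{c_e}$ with a fixed basis. A local ordering $L$ fixes, at each vertex $v$ of degree $d_v$, an ordering $e(v,1),\dots,e(v,d_v)$ of the incident edge-ends. Given a tensor $\mathcal T_v\in\bigotimes_{i=1}^{d_v}\mathbb{C}^{c_{e(v,i)}}$ at each vertex, let $V_S=\bigotimes_{u\in S}\mathbb{C}^{c_{e(u)}}$ and $V_T=\bigotimes_{u\in T}\mathbb{C}^{c_{e(u)}}$. Contracting the network along all edges gives $\beta\in\mathrm{Hom}(V_S,V_T)$, whose matrix entries are $\langle I_T|\beta|I_S\rangle=\sum_W\prod_{v\in V}(\mathcal T_v)_{W|_v}$. Here $W$ ranges over all assignments of basis indices to all edges that agree with $I_S$ on input edges and $I_T$ on output edges, and $W|_v$ is the tuple of indices on $e(v,1),\dots,e(v,d_v)$, so that the $i$-th tensor index at $v$ is contracted with edge $e(v,i)$. Version II: the valence type of $v$ is the sequence $B_v=(c_{e(v,1)},\dots,c_{e(v,d_v)})$. A Version II assignment chooses one tensor $\mathcal T_B\in\bigotimes_i\mathbb{C}^{m_i}$ for each valence type $B=(m_1,\dots,m_k)$ occurring, and places $\mathcal T_{B_v}$ at each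 vertex $v$. The result is denoted $\beta(G,c,L;\mathcal T)$, and $\mathrm{QMF}(G,c,L)$ is its maximal rank over all Version II assignments. An edge cut set is a set $C\subseteq E$ for which there is a partition $S\sqcup T\sqcup V=\bar S\sqcup\bar T$ with $S\subseteq\bar S$, $T\subseteq\bar T$, and $C$ equal to the set of edges having one endpoint in $\bar S$ and the other in $\bar T$. The quantum min-cut is $\mathrm{QMC}(G,c)=\min_C\prod_{e\in C}c_e$, the minimum taken over all edge cut sets $C$. *)

From HB Require Import structures.
From mathcomp Require Import all_boot all_order all_algebra.
Set Implicit Arguments. Unset Strict Implicit. Unset Printing Implicit Defensive.
Import Order.TTheory GRing.Theory Num.Theory.

Definition nS1 := 0%N.  Definition nS2 := 1%N.
Definition nT1 := 2%N.  Definition nT2 := 3%N.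
Definition nA := 4%N.   Definition nB := 5%N.
Definition nP := 6%N.   Definition nQ := 7%N.

(* Edges (numbered 0..7), given by their endpoints:
   e0 = s1a, e1 = ap, e2 = pt1, e3 = s2b, e4 = bq, e5 = qt2, e6 = aq, e7 = bp *)
Definition edges : seq (nat * nat) :=
  [:: (nS1, nA); (nA, nP); (nP, nT1); (nS2, nB); (nB, nQ); (nQ, nT2);
      (nA, nQ); (nB, nP)].

Definition edge_ends (e : 'I_8) : nat * nat := nth (0%N, 0%N) edges e.

Definition cap (e : 'I_8) : nat := 2.

Definition e_s1 : 'I_8 := inord 0.  Definition e_s2 : 'I_8 := inord 3.
Definition e_t1 : 'I_8 := inord 2.  Definition e_t2 : 'I_8 := inord 5.

Definition vertices : seq nat := [:: nA; nB; nP; nQ].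

(* Local ordering L1: the edges e(v,1), e(v,2), e(v,3) at each vertex.
   a: (s1a, ap, aq); b: (s2b, bq, bp); p: (pt1, bp, ap); q: (qt2, aq, bq). *)
Definition L1 (v : nat) : nat * nat * nat :=
  if v == nA then (0, 1, 6)%N
  else if v == nB then (3, 4, 7)%N
  else if v == nP then (2, 7, 1)%N
  else (5, 6, 4)%N.

Definition contraction (C : nzRingType) (T : 'I_2 -> 'I_2 -> 'I_2 -> C)
    (iS1 iS2 iT1 iT2 : 'I_2) : C :=
  (\sum_(W : {ffun 'I_8 -> 'I_2} |
          [&& W e_s1 == iS1, W e_s2 == iS2, W e_t1 == iT1 & W e_t2 == iT2])
     \prod_(v <- vertices)
        let: (x, y, z) := L1 v in T (W (inord x)) (W (inord y)) (W (inord z)))%R.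

(* Rows = output basis I_T = (t1,t2), columns = input basis I_S = (s1,s2). *)
Definition beta (C : nzRingType) (T : 'I_2 -> 'I_2 -> 'I_2 -> C)
    : 'M[C]_(2 * 2, 2 * 2) :=
  \matrix_(r < 2 * 2, k < 2 * 2)
     contraction T (inord (k %/ 2)) (inord (k %% 2))
                   (inord (r %/ 2)) (inord (r %% 2)).

(* A partition S u T u V = Sbar u Tbar with S in Sbar, T in Tbar is given by
   the set Sbar of nodes; its cut set is the set of crossing edges. *)
Definition admissible (X : {set 'I_8}) : bool :=
  [&& (inord nS1 \in X), (inord nS2 \in X),
      (inord nT1 \notin X) & (inord nT2 \notin X)].

Definition crossing (X : {set 'I_8}) (e : 'I_8) : bool :=
  (inord (edge_ends e).1 \in X) != (inord (edge_ends e).2 \in X).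

Definition cut_value (X : {set 'I_8}) : nat :=
  (\prod_(e : 'I_8 | crossing X e) cap e)%N.

(* QMC(G,c) = min over cut sets of the product of capacities.  The seed of
   the min is the product of all capacities, an upper bound of every cut. *)
Definition QMC : nat :=
  \big[minn/(\prod_(e : 'I_8) cap e)%N]_(X : {set 'I_8} | admissible X)
     cut_value X.

From HB Require Import structures.
From mathcomp Require Import all_boot all_order all_algebra.

Set Implicit Arguments.
Unset Strict Implicit.
Unset Printing Implicit Defensive.

Import Order.TTheory GRing.Theory.
Local Open Scope ring_scope.

(* With slice matrices T_i := (T i j k)_(j,k), each entry of beta is the trace
   of a word of length four around the internal cycle a - q - b - p:
   <iT1 iT2|beta|iS1 iS2> = tr (T_iS1 T_iT2 T_iS2 T_iT1).
   Exchanging the two outputs exchanges the letters T_iT1 and T_iT2, and for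
   words in two letters this is a cyclic rotation, so the trace is unchanged.
   Hence the rows of beta indexed by (0,1) and (1,0) coincide and det beta = 0.
   On the other side, every cut separating {s1,s2} from {t1,t2} crosses at
   least two edges, and the cut around {s1,s2} crosses exactly two. *)

Lemma mxtrace_rot4 (R : comNzRingType) n (A B C D : 'M[R]_n) :
  \tr (A *m B *m C *m D) = \tr (D *m A *m B *m C).
Proof. by rewrite mxtrace_mulC !mulmxA. Qed.

Lemma mxtrace_swap_letters (R : comNzRingType) n (A B X Y : 'M[R]_n) :
    X = A \/ X = B -> Y = A \/ Y = B ->
  \tr (X *m B *m Y *m A) = \tr (X *m A *m Y *m B).
Proof.
case=> ->; case=> ->.
- by rewrite [LHS]mxtrace_rot4 [LHS]mxtrace_rot4.
- by rewrite [LHS]mxtrace_rot4.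
- by rewrite [RHS]mxtrace_rot4.
- by rewrite [RHS]mxtrace_rot4 [RHS]mxtrace_rot4.
Qed.

Lemma mxrank_lt_eq_rows (F : fieldType) n (A : 'M[F]_n) i1 i2 :
  i1 != i2 -> A i1 =1 A i2 -> (\rank A < n)%N.
Proof.
move=> neq_i12 eqA12; rewrite ltn_neqAle rank_leq_col andbT -/(row_full A).
by rewrite row_full_unit unitmxE (determinant_alternate neq_i12 eqA12) unitr0.
Qed.

Section Contraction.
Variables (C : comNzRingType) (T : 'I_2 -> 'I_2 -> 'I_2 -> C).

(* a, d, b, g are the indices on the internal edges ap, bp, bq, aq. *)
Lemma contraction_free_edges x y u w :
  contraction T x y u w =
  \sum_(a < 2) \sum_(d < 2) \sum_(b < 2) \sum_(g < 2)
     T x a g * T y b d * T u d a * T w g b.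
Proof.
pose W (p : ('I_2 * 'I_2) * ('I_2 * 'I_2)) : {ffun 'I_8 -> 'I_2} :=
  [ffun e : 'I_8 => nth x [:: x; p.1.1; u; y; p.2.1; w; p.2.2; p.1.2] e].
pose free (V : {ffun 'I_8 -> 'I_2}) :=
  ((V (inord 1), V (inord 7)), (V (inord 4), V (inord 6))).
rewrite /contraction (reindex_onto W free) /=; last first.
  move=> V /and4P[/eqP Vs1 /eqP Vs2 /eqP Vt1 /eqP Vt2]; apply/ffunP => e.
  rewrite /W /free ffunE -Vs1 -Vs2 -Vt1 -Vt2.
  case: e => [[|[|[|[|[|[|[|[|//]]]]]]]] ?];
    by congr (V _); apply/val_inj; rewrite /= inordK.
rewrite (eq_bigr _ (fun a _ => eq_bigr _ (fun d _ => pair_bigA _ _))) /=.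
rewrite pair_bigA pair_bigA /=.
apply: eq_big => [[[a d] [b g]]|[[a d] [b g]] _].
  by rewrite /W /free /e_s1 /e_s2 /e_t1 /e_t2 !ffunE !inordK //= !eqxx.
by rewrite /vertices !big_cons big_nil /L1 /= /W !ffunE !inordK //= mulr1 -!mulrA.
Qed.

Definition slice (i : 'I_2) : 'M[C]_2 := \matrix_(j, k) T i j k.

Lemma contraction_trace x y u w :
  contraction T x y u w = \tr (slice x *m slice w *m slice y *m slice u).
Proof.
rewrite contraction_free_edges /mxtrace; apply: eq_bigr => a _.
rewrite mxE; apply: eq_bigr => d _; rewrite !mxE big_distrl /=.
apply: eq_bigr => b _; rewrite !mxE !big_distrl /=.
apply: eq_bigr => g _; rewrite !mxE.
by rewrite mulrAC (mulrAC (T x a g)).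
Qed.

Lemma slice_cases i : slice i = slice ord0 \/ slice i = slice (lift ord0 ord0).
Proof. by case: i => [[|[|//]] ?]; [left|right]; congr slice; apply: val_inj. Qed.

(* Rows 1 and 2 of beta are the output basis vectors (t1,t2) = (0,1) and (1,0). *)
Lemma beta_rows_swap_outputs : beta T (inord 1) =1 beta T (inord 2).
Proof.
move=> k; rewrite !mxE !inordK // !contraction_trace.
have inord0 : inord 0 = ord0 :> 'I_2 by apply: val_inj; rewrite /= inordK.
have inord1 : inord 1 = lift ord0 ord0 :> 'I_2 by apply: val_inj; rewrite /= inordK.
rewrite -[(1 %% 2)%N]/1%N -[(1 %/ 2)%N]/0%N -[(2 %% 2)%N]/0%N -[(2 %/ 2)%N]/1%N.
by rewrite inord0 inord1; apply: mxtrace_swap_letters; apply: slice_cases.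
Qed.

End Contraction.

Lemma rank_beta_le3 (F : fieldType) (T : 'I_2 -> 'I_2 -> 'I_2 -> F) :
  (\rank (beta T) <= 3)%N.
Proof.
rewrite -ltnS; apply: (mxrank_lt_eq_rows _ (beta_rows_swap_outputs T)).
by rewrite -val_eqE /= !inordK.
Qed.

Lemma admissible_cut_value_ge4 X : admissible X -> (4 <= cut_value X)%N.
Proof.
rewrite /admissible /cut_value big_mkcond /= !big_ord_recl big_ord0 /crossing.
rewrite /edge_ends /= /cap.
case: (inord nS1 \in X) => //; case: (inord nS2 \in X) => //.
case: (inord nT1 \in X) => //; case: (inord nT2 \in X) => //.
by case: (inord nA \in X); case: (inord nB \in X);
   case: (inord nP \in X); case: (inord nQ \in X).
Qed.

Definition inputs_side : {set 'I_8} := [set inord nS1; inord nS2].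

Lemma inputs_side_admissible : admissible inputs_side.
Proof. by rewrite /admissible /inputs_side !inE -!val_eqE /= !inordK. Qed.

Lemma cut_value_inputs_side : cut_value inputs_side = 4%N.
Proof.
rewrite /cut_value big_mkcond /= !big_ord_recl big_ord0 /crossing.
by rewrite /edge_ends /= /cap /inputs_side !inE -!val_eqE /= !inordK.
Qed.

Lemma QMC_eq4 : QMC = 4%N.
Proof.
apply/eqP; rewrite eqn_leq; apply/andP; split.
  have := bigmin_le_cond (\prod_e cap e)%N cut_value inputs_side_admissible.
  by rewrite minEnat cut_value_inputs_side.
apply: (big_ind (fun n => 4 <= n)%N) => [||X]; last exact: admissible_cut_value_ge4.
  by rewrite /cap prod_nat_const card_ord.
by move=> m n le4m le4n; rewrite leq_min le4m le4n.
Qed.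

Theorem mainTheorem10 :
  (forall (C : numClosedFieldType) (T : 'I_2 -> 'I_2 -> 'I_2 -> C),
      (\rank (beta T) <= 3)%N) /\ QMC = 4%N.
Proof. by split; [move=> C T; exact: rank_beta_le3 | exact: QMC_eq4]. Qed.
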